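(* Let $\mathcal A$ be a perfect algebra over a field $k$ and $S$ a commutative, associative, unital $k$-algebra. If the map $\psi:C(\mathcal A)\otimes S\to C(\mathcal A\otimes S)$, $\gamma\otimes s\mapsto\gamma\otimes L_s$, is an isomorphism, then $$\mathcal D(\mathcal A\otimes S)=\mathcal D(\mathcal A)\overleftarrow{\otimes} S\ \oplus\ C(\mathcal A)\overrightarrow{\otimes}\mathcal D(S).\qquad( * )$$ In particular $( * )$ holds if one of the following is satisfied: (i) $S$ is finite dimensional; (ii) $\mathcal A$ is finitely generated (as an algebra over $k$); (iii) $\mathcal A$ is a pfgc algebra; (iv) $\mathcal A$ is unital. Finally, if one of the following is satisfied: (i) $\mathcal A$ or $S$ is finite dimensional; (ii) $C(\mathcal A)$ is finite dimensional or $S$ is finitely generated over $k$, and one of the following holds: (a) $\mathcal A$ is finitely generated over $k$, (b) $\mathcal A$ is finitely generated as a $C(\mathcal A)$-module and $[\mathcal D(\mathcal A),C(\mathcal A)]=0$, (c) $\mathcal A$ is finitely generated as a $dC(\mathcal A)$-module; then $$\mathcal D(\mathcal A\otimes S)=\mathcal D(\mathcal A)\otimes S\ \oplus\ C(\mathcal A)\otimes\mathcal D(S).$$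
   Context: Algebras are $k$-vector spaces with a bilinear product (not necessarily associative); perfect means $\mathcal A\mathcal A=\mathcal A$. $\mathcal D(\cdot)$ denotes the Lie algebra of derivations. $C(\mathcal A)=\{\gamma\in\operatorname{End}(\mathcal A)\mid\gamma(xy)=\gamma(x)y=x\gamma(y)\}$ is the centroid (commutative when $\mathcal A$ is perfect) and $\mathcal A$ is a $C(\mathcal A)$-module via $\gamma\cdot a=\gamma(a)$; $L_s$ is left multiplication by $s$ on $S$. $\mathcal A$ is pfgc if $\mathcal A\neq0$, perfect, and finitely generated as a $C(\mathcal A)$-module. $dC(\mathcal A)=\{\gamma\in C(\mathcal A)\mid[\gamma,\mathcal D(\mathcal A)]=0\}$. A family $\{f_i\}$ of endomorphisms of a vector space $V$ is summable if for each $v\in V$, $f_i(v)=0$ for all but finitely many $i$ (then $\sum_if_i$ is defined pointwise). For subspaces $E_V\subseteq\operatorname{End}(V)$, $E_W\subseteq\operatorname{End}(W)$: $E_V\overleftarrow{\otimes}E_W$ is the set of operators $\sum_i f_i\otimes g_i$ on $V\otimes W$ with $\{f_i\}\subseteq E_V$ summable on $V$ and $\{g_i\}\subseteq E_W$ arbitrary; given a basis $\{f_i\}$ of $E_V$, $E_V\overrightarrow{\otimes}E_W$ is the set of $\sum_i f_i\otimes g_i$ with $\{g_i\}\subseteq E_W$ summable on $W$. $S$ is identified with a subspace of $\operatorname{End}(S)$ via left multiplication, and all these spaces are regarded inside $\operatorname{End}(\mathcal A\otimes S)$. *)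

From HB Require Import structures.
From mathcomp Require Import all_boot all_order all_algebra.
Set Implicit Arguments.
Unset Strict Implicit.
Unset Printing Implicit Defensive.
Import GRing.Theory.
Local Open Scope ring_scope.

(* Conventions: a (not necessarily associative) k-algebra is an lmodType k  *)
(* V together with a bilinear product m : V -> V -> V.  Endomorphisms of V  *)
(* are represented as functions V -> V (linearity is stated explicitly);    *)
(* equality of operators is pointwise equality.                             *)

Section Defs.
Variable k : fieldType.

Definition lin (U V : lmodType k) (f : U -> V) : Prop :=
  forall (a : k) (x y : U), f (a *: x + y) = a *: f x + f y.

Definition bilin (U V W : lmodType k) (m : U -> V -> W) : Prop :=
  (forall y, lin (fun x => m x y)) /\ (forall x, lin (m x)).

Definition is_tensor_product (U V W : lmodType k) (tens : U -> V -> W) : Prop :=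
  bilin tens /\
  forall (X : lmodType k) (f : U -> V -> X), bilin f ->
    (exists g : W -> X, lin g /\ forall u v, g (tens u v) = f u v) /\
    (forall g1 g2 : W -> X, lin g1 -> lin g2 ->
       (forall u v, g1 (tens u v) = f u v) ->
       (forall u v, g2 (tens u v) = f u v) -> forall w, g1 w = g2 w).

Definition is_tensor_op (U V W : lmodType k) (tens : U -> V -> W)
  (f : U -> U) (g : V -> V) (h : W -> W) : Prop :=
  lin h /\ forall u v, h (tens u v) = tens (f u) (g v).

Definition is_derivation (V : lmodType k) (m : V -> V -> V) (d : V -> V) : Prop :=
  lin d /\ forall x y, d (m x y) = m (d x) y + m x (d y).

Definition in_centroid (V : lmodType k) (m : V -> V -> V) (g : V -> V) : Prop :=
  lin g /\ forall x y, g (m x y) = m (g x) y /\ g (m x y) = m x (g y).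

Definition in_dcentroid (V : lmodType k) (m : V -> V -> V) (g : V -> V) : Prop :=
  in_centroid m g /\
  forall d, is_derivation m d -> forall x, g (d x) = d (g x).

Definition DC_commute (V : lmodType k) (m : V -> V -> V) : Prop :=
  forall d g, is_derivation m d -> in_centroid m g -> forall x, d (g x) = g (d x).

Definition perfect (V : lmodType k) (m : V -> V -> V) : Prop :=
  forall x : V, exists r : seq (V * V), x = \sum_(p <- r) m p.1 p.2.

Definition unital_alg (V : lmodType k) (m : V -> V -> V) : Prop :=
  exists e : V, forall x, m e x = x /\ m x e = x.

Definition fin_dim (V : lmodType k) : Prop :=
  exists (n : nat) (v : 'I_n -> V),
    forall x : V, exists c : 'I_n -> k, x = \sum_i c i *: v i.

Definition op_space_fin_dim (V : lmodType k) (P : (V -> V) -> Prop) : Prop :=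
  exists (n : nat) (v : 'I_n -> V -> V), (forall i, P (v i)) /\
    forall g, P g -> exists c : 'I_n -> k, forall x, g x = \sum_i c i *: v i x.

Definition alg_fg (V : lmodType k) (m : V -> V -> V) : Prop :=
  exists (n : nat) (v : 'I_n -> V),
    forall P : V -> Prop, P 0 ->
      (forall (a : k) x y, P x -> P y -> P (a *: x + y)) ->
      (forall x y, P x -> P y -> P (m x y)) ->
      (forall i, P (v i)) -> forall x, P x.

Definition comalg_fg (S : comAlgType k) : Prop :=
  exists (n : nat) (v : 'I_n -> S),
    forall P : S -> Prop, P 1 ->
      (forall (a : k) x y, P x -> P y -> P (a *: x + y)) ->
      (forall x y, P x -> P y -> P (x * y)) ->
      (forall i, P (v i)) -> forall x, P x.

Definition module_fg_over (V : lmodType k) (Q : (V -> V) -> Prop) : Prop :=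
  exists (n : nat) (v : 'I_n -> V),
    forall x : V, exists g : 'I_n -> V -> V,
      (forall i, Q (g i)) /\ x = \sum_i g i (v i).

Definition pfgc (V : lmodType k) (m : V -> V -> V) : Prop :=
  (exists x : V, x <> 0) /\ perfect m /\ module_fg_over (in_centroid m).

Definition mulL (S : comAlgType k) (s : S) : S -> S := fun t => s * t.

Definition summable (I : eqType) (V W : lmodType k) (f : I -> V -> W) : Prop :=
  forall v, exists r : seq I, forall i, i \notin r -> f i v = 0.

Definition fam_sum (I : eqType) (V W : lmodType k) (h : I -> V -> W)
  (z : V -> W) : Prop :=
  forall v, exists r : seq I,
    [/\ uniq r, (forall i, i \notin r -> h i v = 0) & z v = \sum_(i <- r) h i v].

Definition centroid_basis (V : lmodType k) (m : V -> V -> V) (J : eqType)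
  (b : J -> V -> V) : Prop :=
  (forall j, in_centroid m (b j)) /\
  (forall (r : seq J) (c : J -> k), uniq r ->
     (forall x, \sum_(j <- r) c j *: b j x = 0) -> forall j, j \in r -> c j = 0) /\
  (forall g, in_centroid m g -> exists (r : seq J) (c : J -> k),
     uniq r /\ forall x, g x = \sum_(j <- r) c j *: b j x).

Section Tensor.
Variables (A : lmodType k) (mulA : A -> A -> A) (S : comAlgType k)
  (T : lmodType k) (tens : A -> S -> T).

(* D(A) <-(x) S *)
Definition left_tens_set (z : T -> T) : Prop :=
  exists (I : eqType) (f : I -> A -> A) (s : I -> S) (h : I -> T -> T),
    [/\ forall i, is_derivation mulA (f i), summable f,
        forall i, is_tensor_op tens (f i) (mulL (s i)) (h i) & fam_sum h z].

(* C(A) ->(x) D(S), relative to the basis b of C(A) *)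
Definition right_tens_set (J : eqType) (b : J -> A -> A) (z : T -> T) : Prop :=
  exists (g : J -> S -> S) (h : J -> T -> T),
    [/\ forall j, is_derivation (@GRing.mul S) (g j), summable g,
        forall j, is_tensor_op tens (b j) (g j) (h j) & fam_sum h z].

(* D(A) (x) S  (finite sums) *)
Definition fin_left_tens_set (z : T -> T) : Prop :=
  exists (n : nat) (f : 'I_n -> A -> A) (s : 'I_n -> S) (h : 'I_n -> T -> T),
    [/\ forall i, is_derivation mulA (f i),
        forall i, is_tensor_op tens (f i) (mulL (s i)) (h i) &
        forall t, z t = \sum_i h i t].

(* C(A) (x) D(S)  (finite sums) *)
Definition fin_right_tens_set (z : T -> T) : Prop :=
  exists (n : nat) (g : 'I_n -> A -> A) (d : 'I_n -> S -> S) (h : 'I_n -> T -> T),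
    [/\ forall i, in_centroid mulA (g i),
        forall i, is_derivation (@GRing.mul S) (d i),
        forall i, is_tensor_op tens (g i) (d i) (h i) &
        forall t, z t = \sum_i h i t].

Definition dsum_decomp (Dset X Y : (T -> T) -> Prop) : Prop :=
  (forall z, Dset z <-> exists x y, [/\ X x, Y y & forall t, z t = x t + y t]) /\
  (forall z, X z -> Y z -> forall t, z t = 0).

Variable mulT : T -> T -> T.

(* the decomposition ( * ) for every basis of C(A) *)
Definition star_decomp : Prop :=
  forall (J : eqType) (b : J -> A -> A), centroid_basis mulA b ->
    dsum_decomp (is_derivation mulT) left_tens_set (right_tens_set b).

(* psi : C(A) (x) S -> C(A (x) S), gamma (x) s |-> gamma (x) L_s, is an   *)
(* isomorphism.  C(A) is given as an abstract vector space CA with a linear *)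
(* isomorphism iota onto C(A), and (U, tensU) is a tensor product of CA, S. *)
Definition psi_iso : Prop :=
  exists (CA : lmodType k) (iota : CA -> A -> A) (U : lmodType k)
         (tensU : CA -> S -> U) (psi : U -> T -> T),
    ((forall (a : k) c c' x, iota (a *: c + c') x = a *: iota c x + iota c' x) /\
     (forall c c', (forall x, iota c x = iota c' x) -> c = c') /\
     (forall c, in_centroid mulA (iota c)) /\
     (forall g, in_centroid mulA g -> exists c, forall x, iota c x = g x)) /\
    is_tensor_product tensU /\
    ((forall (a : k) u u' t, psi (a *: u + u') t = a *: psi u t + psi u' t) /\
     (forall c s, is_tensor_op tens (iota c) (mulL s) (psi (tensU c s))) /\
     (forall u u', (forall t, psi u t = psi u' t) -> u = u') /\
     (forall u, in_centroid mulT (psi u)) /\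
     (forall g, in_centroid mulT g -> exists u, forall t, psi u t = g t)).

End Tensor.
End Defs.

(* Write R_s = id (x) L_s for s in S.  For a derivation D of A (x) S, each
   commutator [D, R_s] lies in the centroid of A (x) S.  When that centroid is
   spanned by the maps g (x) L_s with g in C(A), fixing a basis (b_j) of C(A)
   gives a unique expansion [D, R_s] = sum_j b_j (x) L_(g_j(s)); uniqueness makes
   each g_j a derivation of S, finitely many g_j(s) being nonzero for each s.
   Then E = sum_j b_j (x) g_j is a derivation with the same commutators with
   the R_s as D, so D - E is an S-linear derivation; expanding it over a basis
   (e_i) of S gives D - E = sum_i f_i (x) L_(e_i) with derivations f_i of A.
   The sum is direct since an S-linear map vanishing on A (x) 1 is zero.
   A centroid element of the perfect algebra A (x) S commutes with the R_s, so
   it is likewise sum_i c_i (x) L_(e_i) with c_i in C(A); each listed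
   finiteness condition makes the family (c_i), and for the last statement
   the families (f_i) and (g_j), finitely supported. *)

From HB Require Import structures.
From mathcomp Require Import all_boot all_order all_algebra.
From mathcomp Require Import boolp classical_sets functions.
From Stdlib Require Import ClassicalEpsilon.
Set Implicit Arguments.
Unset Strict Implicit.
Unset Printing Implicit Defensive.
Import GRing.Theory.
Local Open Scope ring_scope.

Section FiniteSupport.
Variables (I : eqType) (W : nmodType).
Implicit Types (F : I -> W) (r : seq I).

Definition supported F r := forall i, i \notin r -> F i = 0.

Lemma supported_sub F r r' : {subset r <= r'} -> supported F r -> supported F r'.
Proof. by move=> sub Fr i ir'; apply: Fr; apply: contra ir'; apply: sub. Qed.

Lemma big_supported_eq F r1 r2 : uniq r1 -> uniq r2 ->
  supported F r1 -> supported F r2 -> \sum_(i <- r1) F i = \sum_(i <- r2) F i.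
Proof.
move=> u1 u2 F1 F2.
rewrite (bigID (mem r2)) /= [X in _ + X]big1 ?addr0; last by move=> i /F2.
rewrite [RHS](bigID (mem r1)) /= [X in _ + X]big1 ?addr0; last by move=> i /F1.
rewrite -[LHS]big_filter -[RHS]big_filter; apply: perm_big.
apply: uniq_perm; rewrite ?filter_uniq // => i.
by rewrite !mem_filter andbC.
Qed.

Definition restr F r i := if i \in r then F i else 0.

Lemma restr_supported F r : supported (restr F r) r.
Proof. by move=> i /negbTE ir; rewrite /restr ir. Qed.

(* Only meaningful when [F] has finite support. *)
Definition fsum F : W :=
  \sum_(i <- epsilon (inhabits [::]) (fun r => uniq r /\ supported F r)) F i.

Lemma fsumE F r : uniq r -> supported F r -> fsum F = \sum_(i <- r) F i.
Proof.
move=> ur Fr; rewrite /fsum.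
have [] := @epsilon_spec _ (inhabits [::]) (fun r => uniq r /\ supported F r)
  (ex_intro _ r (conj ur Fr)).
by move=> u0 F0; apply: big_supported_eq.
Qed.

End FiniteSupport.

Lemma subset_undup_catl {T : eqType} {r1 r2 : seq T} : {subset r1 <= undup (r1 ++ r2)}.
Proof. by move=> x xr; rewrite mem_undup mem_cat xr. Qed.

Lemma subset_undup_catr {T : eqType} {r1 r2 : seq T} : {subset r2 <= undup (r1 ++ r2)}.
Proof. by move=> x xr; rewrite mem_undup mem_cat xr orbT. Qed.

Lemma undup_cat3P {T : eqType} (r1 r2 r3 : seq T) :
  [/\ uniq (undup (r1 ++ r2 ++ r3)), {subset r1 <= undup (r1 ++ r2 ++ r3)},
      {subset r2 <= undup (r1 ++ r2 ++ r3)} & {subset r3 <= undup (r1 ++ r2 ++ r3)}].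
Proof. by split=> [|x xr|x xr|x xr]; rewrite ?undup_uniq // mem_undup !mem_cat xr ?orbT. Qed.

Section LinearMaps.
Variable k : fieldType.

Section OneMap.
Variables (U V : lmodType k) (h : U -> V).
Hypothesis hl : lin h.

Lemma lin0 : h 0 = 0.
Proof.
by have := hl 1 0 0; rewrite !scale1r addr0 => /eqP; rewrite addrC -subr_eq subrr => /eqP.
Qed.

Lemma linD x y : h (x + y) = h x + h y.
Proof. by have := hl 1 x y; rewrite !scale1r. Qed.

Lemma linZ a x : h (a *: x) = a *: h x.
Proof. by have := hl a x 0; rewrite !addr0 lin0 addr0. Qed.

Lemma linB x y : h (x - y) = h x - h y.
Proof. by rewrite linD -scaleN1r linZ scaleN1r. Qed.

Lemma lin_sum (J : Type) (r : seq J) (P : pred J) (F : J -> U) :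
  h (\sum_(j <- r | P j) F j) = \sum_(j <- r | P j) h (F j).
Proof. by elim/big_rec2: _ => [|j y1 y2 _ <-]; rewrite ?lin0 ?linD. Qed.

End OneMap.

Variables U V W : lmodType k.

Lemma lin_comp (f : U -> V) (g : V -> W) : lin f -> lin g -> lin (fun x => g (f x)).
Proof. by move=> hf hg a x y; rewrite hf hg. Qed.

Lemma lin_zero : lin (fun _ : U => 0 : V).
Proof. by move=> a x y; rewrite scaler0 addr0. Qed.

Lemma lin_scale_add (f g : U -> V) b :
  lin f -> lin g -> lin (fun x => b *: f x + g x).
Proof.
by move=> hf hg a x y; rewrite hf hg !scalerDr !scalerA mulrC addrACA.
Qed.

Lemma lin_sub (f g : U -> V) : lin f -> lin g -> lin (fun x => f x - g x).
Proof.
move=> hf hg; have := lin_scale_add (-1) hg hf.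
by congr lin; apply: funext => x; rewrite scaleN1r addrC.
Qed.

Lemma lin_scale (f : U -> V) b : lin f -> lin (fun x => b *: f x).
Proof.
move=> hf; have := lin_scale_add b hf (@lin_zero).
by congr lin; apply: funext => x; rewrite addr0.
Qed.

Lemma lin_sum_fun (J : Type) (r : seq J) (F : J -> U -> V) :
  (forall j, lin (F j)) -> lin (fun x => \sum_(j <- r) F j x).
Proof.
move=> hF a x y; elim: r => [|j r IH]; first by rewrite !big_nil scaler0 addr0.
by rewrite !big_cons IH hF scalerDr addrACA.
Qed.

Lemma lin_fsum (J : eqType) (F : J -> U -> V) :
  (forall j, lin (F j)) -> (forall x, exists r, supported (F^~ x) r) ->
  lin (fun x => fsum (F^~ x)).
Proof.
move=> hF supp a x y; have [r1 s1] := supp x; have [r2 s2] := supp y.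
have [r3 s3] := supp (a *: x + y); have [uR sub1 sub2 sub3] := undup_cat3P r1 r2 r3.
rewrite (fsumE uR (supported_sub sub1 s1)) (fsumE uR (supported_sub sub2 s2)).
rewrite (fsumE uR (supported_sub sub3 s3)) scaler_sumr -big_split.
by apply: eq_bigr => j _; rewrite hF.
Qed.

End LinearMaps.

Section TensorProduct.
Variables (k : fieldType) (U V W : lmodType k) (tens : U -> V -> W).
Hypothesis tensP : is_tensor_product tens.

Lemma tens_linl v : lin (fun u => tens u v). Proof. by case: tensP => -[]. Qed.
Lemma tens_linr u : lin (tens u). Proof. by case: tensP => -[]. Qed.
Lemma tens0l v : tens 0 v = 0. Proof. exact: lin0 (tens_linl v). Qed.
Lemma tens0r u : tens u 0 = 0. Proof. exact: lin0 (tens_linr u). Qed.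

Lemma tens_lift (X : lmodType k) (f : U -> V -> X) : bilin f ->
  exists g : W -> X, lin g /\ forall u v, g (tens u v) = f u v.
Proof. by move=> bf; have [[g hg] _] := tensP.2 X f bf; exists g. Qed.

Definition tens_span (w : W) : Prop := forall Q : W -> Prop, Q 0 ->
  (forall a x y, Q x -> Q y -> Q (a *: x + y)) -> (forall u v, Q (tens u v)) -> Q w.

Definition tens_spanb : pred W := fun w => `[< tens_span w >].

Lemma tens_spanb_closed : subsemimod_closed tens_spanb.
Proof.
apply: GRing.submod_closed_semi; split; first by rewrite unfold_in; apply/asboolP => Q.
move=> a x y; rewrite !unfold_in => /asboolP Qx /asboolP Qy; apply/asboolP.
by move=> Q Q0 QC Qt; apply: (QC); [exact: (Qx Q Q0 QC Qt)|exact: (Qy Q Q0 QC Qt)].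
Qed.

HB.instance Definition _ := GRing.isSubmodClosed.Build k W tens_spanb tens_spanb_closed.
Record tens_sub := TensSub { tens_val : W; _ : tens_val \in tens_spanb }.
HB.instance Definition _ := [isSub for tens_val].
HB.instance Definition _ := [Choice of tens_sub by <:].
HB.instance Definition _ := [SubChoice_isSubLmodule of tens_sub by <:].

(* The span of the pure tensors satisfies the universal property, so it is everything. *)
Lemma tens_ind (Q : W -> Prop) : Q 0 ->
  (forall a x y, Q x -> Q y -> Q (a *: x + y)) -> (forall u v, Q (tens u v)) ->
  forall w, Q w.
Proof.
move=> Q0 QC Qt w.
have tens_in u v : tens u v \in tens_spanb by rewrite unfold_in; apply/asboolP => ?.
pose tens' u v : tens_sub := TensSub (tens_in u v).
have bil : bilin tens'.
  by split=> [v|u] a x y; apply: val_inj => /=; [apply: tens_linl|apply: tens_linr].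
have [g [gl gt]] := tens_lift bil.
have gK : tens_val (g w) = w.
  apply: ((tensP.2 W tens tensP.1).2 (fun w => tens_val (g w)) id) => //.
  - by move=> a x y; rewrite gl.
  - by move=> u v; rewrite gt.
have : tens_val (g w) \in tens_spanb by case: (g w).
by rewrite gK unfold_in => /asboolP; apply.
Qed.

Lemma tens_lin_ext (X : lmodType k) (g1 g2 : W -> X) : lin g1 -> lin g2 ->
  (forall u v, g1 (tens u v) = g2 (tens u v)) -> forall w, g1 w = g2 w.
Proof.
move=> h1 h2 ht; apply: tens_ind => [|a x y ex ey|//]; first by rewrite !lin0.
by rewrite h1 h2 ex ey.
Qed.

Lemma tens_bilin_ext (X : lmodType k) (M1 M2 : W -> W -> X) : bilin M1 -> bilin M2 ->
  (forall a s b t, M1 (tens a s) (tens b t) = M2 (tens a s) (tens b t)) ->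
  forall x y, M1 x y = M2 x y.
Proof.
move=> [h11 h12] [h21 h22] e x y; move: x; apply: tens_lin_ext => // a s.
by move: y; apply: tens_lin_ext => // b t; apply: e.
Qed.

Definition tensor_map (f : U -> U) (g : V -> V) : W -> W :=
  epsilon (inhabits (fun _ => 0)) (is_tensor_op tens f g).

Section TensorMap.
Variables (f : U -> U) (g : V -> V).
Hypotheses (fl : lin f) (gl : lin g).

Lemma tensor_mapP : is_tensor_op tens f g (tensor_map f g).
Proof.
have bil : bilin (fun u v => tens (f u) (g v)).
  split=> [v|u] a x y /=; first by rewrite fl; apply: tens_linl.
  by rewrite gl; apply: tens_linr.
by apply: epsilon_spec; have [h hP] := tens_lift bil; exists h.
Qed.

Lemma tensor_map_lin : lin (tensor_map f g). Proof. by case: tensor_mapP. Qed.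

Lemma tensor_mapE u v : tensor_map f g (tens u v) = tens (f u) (g v).
Proof. by case: tensor_mapP => _; apply. Qed.

Lemma tensor_map_unique h : is_tensor_op tens f g h -> forall w, h w = tensor_map f g w.
Proof.
move=> [hl ht]; apply: tens_lin_ext => // [|u v]; first exact: tensor_map_lin.
by rewrite ht tensor_mapE.
Qed.

End TensorMap.
End TensorProduct.

Section FreeFamilies.
Variables (k : fieldType) (V : lmodType k).

Definition free_family (J : eqType) (b : J -> V) := forall (r : seq J) (c : J -> k), uniq r ->
  \sum_(j <- r) c j *: b j = 0 -> forall j, j \in r -> c j = 0.

Local Open Scope classical_set_scope.

Definition free_set (B : set V) := forall (r : seq V) (c : V -> k), uniq r ->
  (forall v, v \in r -> B v) -> \sum_(v <- r) c v *: v = 0 ->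
  forall v, v \in r -> c v = 0.

Definition spanned_by (B : set V) (x : V) := exists (r : seq V) (c : V -> k),
  [/\ uniq r, (forall v, v \in r -> B v) & x = \sum_(v <- r) c v *: v].

Lemma free_setU1 (B : set V) x : free_set B -> ~ spanned_by B x -> free_set (B `|` [set x]).
Proof.
move=> freeB xB r c ur rB e.
have remB v : v \in rem x r -> B v.
  rewrite (mem_rem_uniq _ ur) inE => /andP[vx vr].
  by case: (rB v vr) => // vx'; rewrite vx' eqxx in vx.
have cx : x \in r -> c x = 0.
  move=> xr; apply: contrapT => /eqP cx0; apply: xB.
  exists (rem x r), (fun v => - (c x)^-1 * c v); split => //; first exact: rem_uniq.
  move: e; rewrite (big_rem x xr) /= => /eqP; rewrite addr_eq0 => /eqP e.
  rewrite -[LHS]scale1r -[in LHS](mulVf cx0) -scalerA e scalerN scaler_sumr -sumrN.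
  by apply: eq_bigr => v _; rewrite scalerA mulNr scaleNr.
have e' : \sum_(v <- rem x r) c v *: v = 0.
  case: (boolP (x \in r)) => xr; last by rewrite rem_id.
  by move: e; rewrite (big_rem x xr) /= cx // scale0r add0r.
move=> v vr; case: (eqVneq v x) => [vx|vx]; first by rewrite vx; apply: cx; rewrite -vx.
apply: (freeB (rem x r)) e' _ _ => //; first exact: rem_uniq.
by rewrite (mem_rem_uniq _ ur) inE vx.
Qed.

Lemma chain_cover (F : set (set V)) (r : seq V) : total_on F subset ->
  r != [::] -> (forall v, v \in r -> (\bigcup_(X in F) X) v) ->
  exists2 B, F B & forall v, v \in r -> B v.
Proof.
move=> tot; elim: r => // v r IH _ hr.
have [B FB Bv] := hr v (mem_head _ _).
case: (eqVneq r [::]) => [->|rn]; first by exists B => // w; rewrite inE => /eqP ->.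
have [B' FB' hB'] := IH rn (fun w wr => hr w (@mem_behead _ (v :: r) w wr)).
case: (tot B B' FB FB') => sub.
  by exists B' => // w; rewrite inE => /orP[/eqP ->|/hB']; [apply: sub|].
by exists B => // w; rewrite inE => /orP[/eqP ->|/hB'/sub].
Qed.

Lemma hamel_set (P : set V) : exists B : set V,
  [/\ B `<=` P, free_set B & forall x, P x -> spanned_by B x].
Proof.
have [|B [[BP freeB] maxB]] := @Zorn_bigcup V (fun B => B `<=` P /\ free_set B).
  move=> F FP tot; split; first by move=> v [B FB Bv]; apply: (FP B FB).1.
  move=> r c ur rU e v vr.
  have rn : r != [::] by case: r vr {ur rU e}.
  have [B FB rB] := chain_cover tot rn rU.
  exact: (FP B FB).2 r c ur rB e v vr.
exists B; split => // x Px; apply: contrapT => xB.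
have Bx : ~ B x.
  move=> Bx; apply: xB; exists [:: x], (fun _ => 1); split => //.
    by move=> v; rewrite inE => /eqP ->.
  by rewrite big_seq1 scale1r.
apply: (maxB (B `|` [set x])); last first.
  by split; [move=> v [/BP|->]|apply: free_setU1].
by split; [apply: subsetUl|move=> sub; apply: Bx; apply: sub; right].
Qed.

Lemma hamel (P : set V) : exists (J : eqType) (b : J -> V),
  [/\ forall j, P (b j), free_family b &
      forall x, P x -> exists (r : seq J) (c : J -> k), uniq r /\ x = \sum_(j <- r) c j *: b j].
Proof.
have [B [BP freeB spanB]] := hamel_set P.
pose J : eqType := {x : V | `[< B x >]}.
exists J, val; split.
- by move=> j; apply: BP; apply/asboolP; exact: (valP j).
- move=> r c ur e j jr.
  pose c' v := if insub v is Some i then c i else 0.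
  have c'E (i : J) : c' (val i) = c i by rewrite /c' valK.
  have uv : uniq (map val r) by rewrite map_inj_uniq //; apply: val_inj.
  have rB v : v \in map val r -> B v by move=> /mapP[i _ ->]; apply/asboolP; exact: (valP i).
  have e' : \sum_(v <- map val r) c' v *: v = 0.
    by rewrite big_map -[RHS]e; apply: eq_bigr => i _; rewrite c'E.
  by have := freeB _ _ uv rB e' _ (map_f val jr); rewrite c'E.
- move=> x /spanB[r [c [ur rB ->]]].
  have rE : map val (pmap insub r : seq J) = r.
    rewrite pmap_filter; last exact: insubK.
    by apply/all_filterP/allP => v /rB /asboolP Bv; case: insubP => // /negP.
  exists (pmap insub r), (fun j => c (val j)); split.
    by apply: (@map_uniq _ _ val); rewrite rE.
  by rewrite -[in LHS]rE big_map.
Qed.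

Lemma basis_exists : exists (J : eqType) (b : J -> V), free_family b /\
  forall x, exists (r : seq J) (c : J -> k), uniq r /\ x = \sum_(j <- r) c j *: b j.
Proof. by have [J [b [_ freeb spanb]]] := hamel setT; exists J, b; split=> // x; apply: spanb. Qed.

Section Coordinates.
Variables (J : eqType) (b : J -> V).
Hypotheses (freeb : free_family b)
  (spanb : forall x, exists (r : seq J) (c : J -> k), uniq r /\ x = \sum_(j <- r) c j *: b j).

Lemma sum_restr c r : \sum_(j <- r) c j *: b j = \sum_(j <- r) restr c r j *: b j.
Proof. by apply: eq_big_seq => j jr; rewrite /restr jr. Qed.

Lemma restr_widen r R c : uniq r -> uniq R -> {subset r <= R} ->
  \sum_(j <- r) c j *: b j = \sum_(j <- R) restr c r j *: b j.
Proof.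
move=> ur uR sub; rewrite sum_restr; apply: big_supported_eq => // j jn.
  by rewrite /restr (negbTE jn) scale0r.
rewrite /restr; case: ifP => [jr|]; last by rewrite scale0r.
by rewrite (sub j jr) in jn.
Qed.

Lemma coef_unique r c r' c' : uniq r -> uniq r' ->
  \sum_(j <- r) c j *: b j = \sum_(j <- r') c' j *: b j ->
  forall j, restr c r j = restr c' r' j.
Proof.
move=> ur ur' e; set R := undup (r ++ r').
have uR : uniq R := undup_uniq _.
have : \sum_(j <- R) (restr c r j - restr c' r' j) *: b j = 0.
  under eq_bigr do rewrite scalerBl.
  rewrite sumrB -!restr_widen ?e ?subrr //; [exact: subset_undup_catr|exact: subset_undup_catl].
move/(freeb uR) => h j; case: (boolP (j \in R)) => jR.
  by apply/eqP; rewrite -subr_eq0; apply/eqP/h.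
rewrite /restr; case: ifP => [/subset_undup_catl jR'|_]; first by rewrite jR' in jR.
by case: ifP => // /subset_undup_catr jR'; rewrite jR' in jR.
Qed.

Definition coef (x : V) : J -> k :=
  let rc := epsilon (inhabits ([::], fun _ => 0))
    (fun rc : seq J * (J -> k) => uniq rc.1 /\ x = \sum_(j <- rc.1) rc.2 j *: b j) in
  restr rc.2 rc.1.

Lemma coefE r c x : uniq r -> x = \sum_(j <- r) c j *: b j ->
  forall j, coef x j = restr c r j.
Proof.
move=> ur e j; rewrite /coef.
have [r0 [c0 [u0 e0]]] := spanb x.
have [] := @epsilon_spec _ (inhabits ([::], fun _ => 0))
  (fun rc : seq J * (J -> k) => uniq rc.1 /\ x = \sum_(j <- rc.1) rc.2 j *: b j)
  (ex_intro _ (r0, c0) (conj u0 e0)).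
by move=> u' e'; apply: coef_unique => //; rewrite -e -e'.
Qed.

Lemma coef_expand x : exists r, [/\ uniq r, supported (coef x) r &
  x = \sum_(j <- r) coef x j *: b j].
Proof.
have [r [c [u e]]] := spanb x; exists r; split => //.
  by move=> j jr; rewrite (coefE u e) /restr (negbTE jr).
by rewrite {1}e sum_restr; apply: eq_bigr => j _; rewrite (coefE u e).
Qed.

Lemma coef_lin j a x y : coef (a *: x + y) j = a * coef x j + coef y j.
Proof.
have [r1 [u1 s1 e1]] := coef_expand x.
have [r2 [u2 s2 e2]] := coef_expand y; set R := undup (r1 ++ r2).
have uR : uniq R := undup_uniq _.
have ext z r : uniq r -> {subset r <= R} -> supported (coef z) r ->
    z = \sum_(i <- r) coef z i *: b i -> z = \sum_(i <- R) coef z i *: b i.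
  move=> ur sub sz ez; rewrite {1}ez; apply: big_supported_eq => // i iR.
    by rewrite sz ?scale0r.
  by rewrite sz ?scale0r //; apply: contra iR; apply: sub.
have ex := ext x r1 u1 subset_undup_catl s1 e1.
have ey := ext y r2 u2 subset_undup_catr s2 e2.
have : a *: x + y = \sum_(i <- R) (a * coef x i + coef y i) *: b i.
  rewrite {1}ex {1}ey scaler_sumr -big_split /=; apply: eq_bigr => i _.
  by rewrite scalerDl scalerA.
move/(coefE uR) => ->; rewrite /restr; case: ifP => // /negbT jR.
rewrite s1 ?s2 ?mulr0 ?addr0 //; apply: contra jR.
  exact: subset_undup_catr.
exact: subset_undup_catl.
Qed.

End Coordinates.
End FreeFamilies.

Section FiniteDimension.
Variable k : fieldType.

Lemma uniq_size_bounded_cover (J : eqType) (N : nat) :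
  (forall l : seq J, uniq l -> (size l <= N)%N) -> exists r : seq J, forall j, j \in r.
Proof.
move=> bnd; pose Q m := `[< exists l : seq J, uniq l /\ size l = m >].
have exQ : exists m, Q m by exists 0%N; apply/asboolP; exists [::].
have ubQ m : Q m -> (m <= N)%N by move=> /asboolP [l [ul <-]]; apply: bnd.
case: (ex_maxnP exQ ubQ) => m /asboolP [l [ul sl]] maxm.
exists l => j; apply: contrapT => /negP jl.
have : Q (size (j :: l)) by apply/asboolP; exists (j :: l); rewrite /= jl ul.
by move/maxm; rewrite /= sl ltnn.
Qed.

(* A nonzero kernel vector of the coefficient matrix would give a vanishing combination. *)
Lemma steinitz (V : lmodType k) (J : eqType) (w : J -> V) (N : nat) (v : 'I_N -> V)
  (l : seq J) : uniq l ->
  (forall c : J -> k, \sum_(j <- l) c j *: w j = 0 -> forall j, j \in l -> c j = 0) ->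
  (forall j, j \in l -> exists c : 'I_N -> k, w j = \sum_q c q *: v q) -> (size l <= N)%N.
Proof.
move=> ul freel spanl; rewrite leqNgt; apply/negP => ltN.
have [cf cfP] : exists cf : J -> 'I_N -> k, forall j, j \in l -> w j = \sum_q cf j q *: v q.
  apply: (@choice _ _ (fun j c => j \in l -> w j = \sum_q c q *: v q)) => j.
  by case: (boolP (j \in l)) => [/spanl [c e]|_]; [exists c|exists (fun _ => 0)].
pose m := size l; pose t := tnth (in_tuple l).
pose M : 'M[k]_(m, N) := \matrix_(i, q) cf (t i) q.
have kerM : kermx M != 0.
  by rewrite -mxrank_eq0 mxrank_ker subn_eq0 -ltnNge (leq_ltn_trans (rank_leq_col M)).
have [y /sub_kermxP yM yn] := rowV0Pn kerM.
have tinj : injective t by apply/tuple_uniqP.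
pose c j := \sum_(i < m | t i == j) y 0 i.
have ct i : c (t i) = y 0 i.
  rewrite /c (bigD1 i) //= big1 ?addr0 // => i' /andP[/eqP/tinj -> ].
  by rewrite eqxx.
have : \sum_(j <- l) c j *: w j = 0.
  rewrite (big_tnth _ _ l) -/t.
  transitivity (\sum_(i < m) \sum_q (y 0 i * cf (t i) q) *: v q).
    apply: eq_bigr => i _; rewrite ct cfP ?mem_tnth // scaler_sumr.
    by apply: eq_bigr => q _; rewrite scalerA.
  rewrite exchange_big /= big1 // => q _; rewrite -scaler_suml.
  have e : \sum_(i < m) y 0 i * cf (t i) q = 0.
    have := congr1 (fun B : 'M[k]_(1, N) => B 0 q) yM; rewrite !mxE; apply: etrans.
    by apply: eq_bigr => i _; rewrite /M mxE.
  by rewrite e scale0r.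
move/freel => c0; move/negP: yn; apply; apply/eqP/rowP => i.
by rewrite mxE -ct c0 // mem_tnth.
Qed.

Lemma free_fin_span_cover (V : lmodType k) (J : eqType) (w : J -> V) (I : finType)
  (v : I -> V) : free_family w -> (forall j, exists c : I -> k, w j = \sum_i c i *: v i) ->
  exists r : seq J, forall j, j \in r.
Proof.
move=> freew spanw; apply: (@uniq_size_bounded_cover _ #|I|) => l ul.
apply: (steinitz (w := w) (v := fun q => v (enum_val q))) => // [c e|j _].
  exact: freew.
have [c ->] := spanw j; exists (fun q => c (enum_val q)).
by rewrite (reindex (@enum_val I predT)) //; apply: onW_bij; apply: enum_val_bij.
Qed.

End FiniteDimension.


Section AlgebraFacts.
Variables (k : fieldType) (V : lmodType k) (m : V -> V -> V).
Hypothesis m_bilin : bilin m.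

Lemma centroid_commutator (d g : V -> V) : is_derivation m d -> in_centroid m g ->
  in_centroid m (fun x => d (g x) - g (d x)).
Proof.
move: m_bilin => [ml mr] [dl dm] [gl gm].
split=> [|x y]; first exact: lin_sub (lin_comp gl dl) (lin_comp dl gl).
have [g1 g2] := gm x y; have [g3 g3'] := gm (d x) y; have [g4 g4'] := gm x (d y).
split.
  have -> : d (g (m x y)) = m (d (g x)) y + m (g x) (d y) by rewrite g1 dm.
  rewrite dm (linD gl) g3 g4 (linB (ml y)).
  by rewrite opprD addrACA subrr addr0.
have -> : d (g (m x y)) = m (d x) (g y) + m x (d (g y)) by rewrite g2 dm.
rewrite dm (linD gl) g3' g4' (linB (mr x)).
by rewrite opprD addrACA subrr add0r.
Qed.

Lemma perfect_centroid_comm (g h : V -> V) : perfect m ->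
  in_centroid m g -> in_centroid m h -> forall x, g (h x) = h (g x).
Proof.
move=> pm [gl gm] [hl hm] x; have [r ->] := pm x.
rewrite (lin_sum hl) (lin_sum gl) [in RHS](lin_sum gl) (lin_sum hl).
apply: eq_bigr => p _; have [h1 _] := hm p.1 p.2; have [_ g2] := gm p.1 p.2.
have [_ g3] := gm (h p.1) p.2; have [h4 _] := hm p.1 (g p.2).
by rewrite h1 g3 g2 h4.
Qed.

Lemma derivation_add (d1 d2 : V -> V) : is_derivation m d1 -> is_derivation m d2 ->
  is_derivation m (fun x => d1 x + d2 x).
Proof.
move: m_bilin => [ml mr] [d1l d1m] [d2l d2m]; split=> [a x y|x y].
  by rewrite d1l d2l scalerDr addrACA.
by rewrite d1m d2m (linD (ml y)) (linD (mr x)) addrACA.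
Qed.

Lemma derivation_sub (d1 d2 : V -> V) : is_derivation m d1 -> is_derivation m d2 ->
  is_derivation m (fun x => d1 x - d2 x).
Proof.
move: m_bilin => [ml mr] [d1l d1m] [d2l d2m]; split=> [|x y].
  exact: lin_sub.
by rewrite d1m d2m (linB (ml y)) (linB (mr x)) opprD addrACA.
Qed.

End AlgebraFacts.

Lemma derivation1 (k : fieldType) (R : lalgType k) (d : R -> R) :
  is_derivation (@GRing.mul R) d -> d 1 = 0.
Proof.
move=> [dl dm]; have := dm 1 1; rewrite !mul1r mulr1 => e.
by apply: (@addrI _ (d 1)); rewrite -e addr0.
Qed.

Definition fin_supported (k : fieldType) (I : eqType) (X : Type) (Y : lmodType k)
  (F : I -> X -> Y) := exists r : seq I, forall i, i \notin r -> forall x, F i x = 0.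

Lemma fin_supported_of_cover (k : fieldType) (I : eqType) (X : Type) (Y : lmodType k)
  (F : I -> X -> Y) : (exists r : seq I, forall i, i \in r) -> fin_supported F.
Proof. by move=> [r rP]; exists r => i; rewrite rP. Qed.

Section TestSets.
Variables (k : fieldType) (X Y : lmodType k).

Definition fin_test_set (P : (X -> Y) -> Prop) :=
  exists n (v : 'I_n -> X), forall f, P f -> (forall q, f (v q) = 0) -> forall x, f x = 0.

Lemma summable_fin_supported (I : eqType) (P : (X -> Y) -> Prop) (F : I -> X -> Y) :
  fin_test_set P -> (forall i, P (F i)) -> summable F -> fin_supported F.
Proof.
move=> [n [v test]] PF sF.
have [f fP] := @choice _ _ (fun q r => supported (F^~ (v q)) r) (fun q => sF (v q)).
exists (flatten (map f (enum 'I_n))) => i ir; apply: test => // q; apply: fP.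
by apply: contra ir => ifq; apply/flatten_mapP; exists q; rewrite ?mem_enum.
Qed.

Lemma fin_test_set_sub (P Q : (X -> Y) -> Prop) :
  fin_test_set P -> (forall f, Q f -> P f) -> fin_test_set Q.
Proof. by move=> [n [v test]] QP; exists n, v => f /QP; apply: test. Qed.

Lemma fin_dim_lin_test : fin_dim X -> fin_test_set (@lin k X Y).
Proof.
move=> [n [v spanv]]; exists n, v => f fl f0 x; have [c ->] := spanv x.
by rewrite (lin_sum fl) big1 // => q _; rewrite (linZ fl) f0 scaler0.
Qed.

End TestSets.

Lemma fin_dim_free_cover (k : fieldType) (V : lmodType k) (J : eqType) (b : J -> V) :
  fin_dim V -> free_family b -> exists r : seq J, forall j, j \in r.
Proof. by move=> [n [v spanv]] freeb; apply: (free_fin_span_cover freeb) => j; apply: spanv. Qed.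

Section AlgebraTestSets.
Variables (k : fieldType) (V : lmodType k) (m : V -> V -> V).
Hypothesis m_bilin : bilin m.

Lemma alg_fg_centroid_test : alg_fg m -> fin_test_set (in_centroid m).
Proof.
move=> [n [v ind]]; exists n, v => f [fl fm] f0; apply: ind => [|a x y fx fy|x y fx _|//].
- exact: lin0 fl.
- by rewrite fl fx fy scaler0 addr0.
- by have [-> _] := fm x y; rewrite fx (lin0 (m_bilin.1 y)).
Qed.

Lemma alg_fg_derivation_test : alg_fg m -> fin_test_set (is_derivation m).
Proof.
move=> [n [v ind]]; exists n, v => f [fl fm] f0; apply: ind => [|a x y fx fy|x y fx fy|//].
- exact: lin0 fl.
- by rewrite fl fx fy scaler0 addr0.
- by rewrite fm fx fy (lin0 (m_bilin.1 y)) (lin0 (m_bilin.2 x)) addr0.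
Qed.

Lemma unital_centroid_test : unital_alg m -> fin_test_set (in_centroid m).
Proof.
move=> [e eP]; exists 1%N, (fun _ => e) => f [fl fm] f0 x.
have [<- _] := eP x; have [-> _] := fm e x.
by rewrite (f0 ord0) (lin0 (m_bilin.1 x)).
Qed.

Lemma module_fg_centroid_test : perfect m -> module_fg_over (in_centroid m) ->
  fin_test_set (in_centroid m).
Proof.
move=> pm [n [v gen]]; exists n, v => f fC f0 x; have [g [gC ->]] := gen x.
rewrite (lin_sum fC.1) big1 // => q _.
by rewrite (perfect_centroid_comm pm fC (gC q)) f0 (lin0 (gC q).1).
Qed.

Lemma module_fg_derivation_test : module_fg_over (in_centroid m) -> DC_commute m ->
  fin_test_set (is_derivation m).
Proof.
move=> [n [v gen]] DC; exists n, v => f fD f0 x; have [g [gC ->]] := gen x.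
rewrite (lin_sum fD.1) big1 // => q _.
by rewrite (DC _ _ fD (gC q)) f0 (lin0 (gC q).1).
Qed.

Lemma dmodule_fg_derivation_test : module_fg_over (in_dcentroid m) ->
  fin_test_set (is_derivation m).
Proof.
move=> [n [v gen]]; exists n, v => f fD f0 x; have [g [gC ->]] := gen x.
rewrite (lin_sum fD.1) big1 // => q _; have [[gl _] gD] := gC q.
by rewrite -(gD _ fD) f0 (lin0 gl).
Qed.

Lemma module_fg_dcentroid : module_fg_over (in_dcentroid m) -> module_fg_over (in_centroid m).
Proof.
move=> [n [v gen]]; exists n, v => x; have [g [gC e]] := gen x.
by exists g; split=> // i; case: (gC i).
Qed.

End AlgebraTestSets.

Lemma comalg_fg_derivation_test (k : fieldType) (S : comAlgType k) :
  comalg_fg S -> fin_test_set (is_derivation (@GRing.mul S)).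
Proof.
move=> [n [v ind]]; exists n, v => d [dl dm] d0; apply: ind => [|a x y dx dy|x y dx dy|//].
- exact: derivation1.
- by rewrite dl dx dy scaler0 addr0.
- by rewrite dm dx dy mul0r mulr0 addr0.
Qed.

Section FamilySums.
Variables (k : fieldType) (X Y : lmodType k).

Lemma fam_sum_lin (I : eqType) (h : I -> X -> Y) z :
  (forall i, lin (h i)) -> fam_sum h z -> lin z.
Proof.
move=> hl hz; have zE t : z t = fsum (h^~ t).
  by have [r [ur rs ->]] := hz t; rewrite (fsumE ur rs).
have -> : z = fun t => fsum (h^~ t) by apply: funext.
by apply: lin_fsum => // t; have [r [_ rs _]] := hz t; exists r.
Qed.

Lemma fam_sum_fin (I : eqType) (h : I -> X -> Y) z r : fam_sum h z -> uniq r ->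
  (forall i, i \notin r -> forall t, h i t = 0) -> forall t, z t = \sum_(i <- r) h i t.
Proof.
move=> hz ur hr t; have [r' [ur' sr' ->]] := hz t.
by apply: big_supported_eq => // i /hr ->.
Qed.

Lemma fam_sum_ord n (h : 'I_n -> X -> Y) z : (forall t, z t = \sum_i h i t) -> fam_sum h z.
Proof.
move=> zE t; exists (index_enum 'I_n); rewrite index_enum_uniq.
by split=> // i; rewrite mem_index_enum.
Qed.

Lemma summable_ord n (F : 'I_n -> X -> Y) : summable F.
Proof. by move=> x; exists (index_enum 'I_n) => i; rewrite mem_index_enum. Qed.

Lemma summable_supp (I : eqType) (F : I -> X -> Y) x :
  summable F -> exists R, uniq R /\ supported (F^~ x) R.
Proof.
move=> sF; have [r rs] := sF x; exists (undup r); split; first exact: undup_uniq.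
by apply: supported_sub rs => i; rewrite mem_undup.
Qed.

End FamilySums.

Section Setting.
Variables (k : fieldType) (A : lmodType k) (mulA : A -> A -> A)
  (S : comAlgType k) (T : lmodType k) (tens : A -> S -> T) (mulT : T -> T -> T).
Hypotheses (mulA_bilin : bilin mulA) (tensP : is_tensor_product tens)
  (mulT_bilin : bilin mulT)
  (mulT_tens : forall a b s t, mulT (tens a s) (tens b t) = tens (mulA a b) (s * t)).

Lemma mulL_lin (s : S) : lin (mulL s).
Proof. by move=> a x y; rewrite /mulL mulrDr scalerAr. Qed.

Lemma tensor_mapL_lin (f : A -> A) s : lin f -> lin (tensor_map tens f (mulL s)).
Proof. by move=> fl; exact (tensor_map_lin tensP fl (mulL_lin s)). Qed.

Lemma tensor_mapLE (f : A -> A) s a x : lin f ->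
  tensor_map tens f (mulL s) (tens a x) = tens (f a) (s * x).
Proof. by move=> fl; exact (tensor_mapE tensP fl (mulL_lin s) a x). Qed.

Definition sact (s : S) : T -> T := tensor_map tens id (mulL s).

Definition S_linear (z : T -> T) := forall s t, z (sact s t) = sact s (z t).

Lemma sact_lin s : lin (sact s).
Proof. exact: tensor_mapL_lin. Qed.

Lemma sact_tens s a x : sact s (tens a x) = tens a (s * x).
Proof. exact: tensor_mapLE. Qed.

Lemma sact_lc c s s' t : sact (c *: s + s') t = c *: sact s t + sact s' t.
Proof.
move: t; apply: (tens_lin_ext tensP (sact_lin _)).
  exact: lin_scale_add (sact_lin _) (sact_lin _).
by move=> u v /=; rewrite !sact_tens mulrDl -scalerAl (tens_linr tensP u).
Qed.

Lemma sact_mul s1 s2 t : sact (s1 * s2) t = sact s1 (sact s2 t).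
Proof.
move: t; apply: (tens_lin_ext tensP (sact_lin _)).
  exact: lin_comp (sact_lin _) (sact_lin _).
by move=> u v; rewrite !sact_tens mulrA.
Qed.

Lemma bilin_postcomp (h : T -> T) : lin h -> bilin (fun x y => h (mulT x y)).
Proof. by move: mulT_bilin => [ml mr] hl; split=> [y|x] a u v /=; rewrite ?ml ?mr hl. Qed.

Lemma bilin_precompl (h : T -> T) : lin h -> bilin (fun x y => mulT (h x) y).
Proof. by move: mulT_bilin => [ml mr] hl; split=> [y|x] a u v /=; rewrite ?hl ?ml ?mr. Qed.

Lemma bilin_precompr (h : T -> T) : lin h -> bilin (fun x y => mulT x (h y)).
Proof. by move: mulT_bilin => [ml mr] hl; split=> [y|x] a u v /=; rewrite ?hl ?ml ?mr. Qed.

Lemma bilin_add (M1 M2 : T -> T -> T) : bilin M1 -> bilin M2 ->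
  bilin (fun x y => M1 x y + M2 x y).
Proof.
by move=> [l1 r1] [l2 r2]; split=> [y|x] a u v /=; rewrite ?l1 ?l2 ?r1 ?r2 scalerDr addrACA.
Qed.

Lemma derivation_tens (z : T -> T) : lin z ->
  (forall a s b t, z (mulT (tens a s) (tens b t)) =
     mulT (z (tens a s)) (tens b t) + mulT (tens a s) (z (tens b t))) ->
  is_derivation mulT z.
Proof.
move=> zl ztens; split=> //; apply: (tens_bilin_ext tensP (bilin_postcomp zl)) => //.
exact: bilin_add (bilin_precompl zl) (bilin_precompr zl).
Qed.

Lemma sact_centroid s : in_centroid mulT (sact s).
Proof.
have sl := sact_lin s; split=> // x y; split.
  move: x y; apply: (tens_bilin_ext tensP (bilin_postcomp sl) (bilin_precompl sl)).
  by move=> a u b v; rewrite sact_tens !mulT_tens sact_tens mulrA.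
move: x y; apply: (tens_bilin_ext tensP (bilin_postcomp sl) (bilin_precompr sl)).
by move=> a u b v; rewrite sact_tens !mulT_tens sact_tens mulrCA.
Qed.

Lemma tens_perfect : perfect mulA -> perfect mulT.
Proof.
move=> pA; apply: (tens_ind tensP) => [|a x y [r1 e1] [r2 e2]|a x].
- by exists [::]; rewrite big_nil.
- exists (map (fun p => (a *: p.1, p.2)) r1 ++ r2).
  rewrite big_cat big_map /= e1 e2 scaler_sumr; congr (_ + _).
  by apply: eq_bigr => p _; rewrite (linZ (mulT_bilin.1 _)).
- have [r ->] := pA a; exists (map (fun p => (tens p.1 x, tens p.2 1)) r).
  rewrite big_map (lin_sum (tens_linl tensP x)); apply: eq_bigr => p _.
  by rewrite mulT_tens mulr1.
Qed.

Lemma centroid_S_linear G : perfect mulA -> in_centroid mulT G -> S_linear G.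
Proof.
move=> pA HG s t.
exact (perfect_centroid_comm (tens_perfect pA) HG (sact_centroid s) t).
Qed.

Lemma fam_sum_tens (I : eqType) (f : I -> A -> A) (d : I -> S -> S) (h : I -> T -> T) z a x R :
  (forall i, is_tensor_op tens (f i) (d i) (h i)) -> fam_sum h z -> uniq R ->
  supported (fun i => tens (f i a) (d i x)) R ->
  z (tens a x) = \sum_(i <- R) tens (f i a) (d i x).
Proof.
move=> hop hz uR sR; have [r [ur rs ->]] := hz (tens a x).
have hE i : h i (tens a x) = tens (f i a) (d i x) by case: (hop i) => _ ->.
rewrite (eq_bigr _ (fun i _ => hE i)); apply: big_supported_eq => // i ir.
by rewrite -hE rs.
Qed.

Section LeftFamily.
Variables (I : eqType) (f : I -> A -> A) (s : I -> S) (h : I -> T -> T) (z : T -> T).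
Hypotheses (f_der : forall i, is_derivation mulA (f i)) (f_summable : summable f)
  (h_op : forall i, is_tensor_op tens (f i) (mulL (s i)) (h i)) (z_sum : fam_sum h z).

Let z_lin : lin z.
Proof. by apply: fam_sum_lin z_sum => i; case: (h_op i). Qed.

Let zE a x R : uniq R -> supported (f^~ a) R ->
  z (tens a x) = \sum_(i <- R) tens (f i a) (s i * x).
Proof. by move=> uR sR; apply: (fam_sum_tens h_op z_sum uR) => i /sR ->; rewrite tens0l. Qed.

Lemma left_family_S_linear : S_linear z.
Proof.
move=> s0 t; move: t; apply: (tens_lin_ext tensP).
- exact: lin_comp (sact_lin s0) z_lin.
- exact: lin_comp z_lin (sact_lin s0).
move=> a x; have [R [uR sR]] := summable_supp a f_summable.
rewrite sact_tens !(zE _ uR sR) (lin_sum (sact_lin s0)).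
by apply: eq_bigr => i _; rewrite sact_tens mulrCA.
Qed.

Lemma left_family_derivation : is_derivation mulT z.
Proof.
apply: derivation_tens z_lin _ => a u b t.
have [R1 s1] := f_summable (mulA a b); have [R2 s2] := f_summable a.
have [R3 s3] := f_summable b; have [uR sub1 sub2 sub3] := undup_cat3P R1 R2 R3.
rewrite mulT_tens (zE _ uR (supported_sub sub1 s1)) (zE _ uR (supported_sub sub2 s2)).
rewrite (zE _ uR (supported_sub sub3 s3)).
rewrite (lin_sum (mulT_bilin.1 _)) (lin_sum (mulT_bilin.2 _)) -big_split /=.
apply: eq_bigr => i _; rewrite !mulT_tens; case: (f_der i) => _ ->.
by rewrite (linD (tens_linl tensP _)) mulrA mulrCA mulrA.
Qed.

End LeftFamily.

Section RightFamily.
Variables (I : eqType) (g : I -> A -> A) (d : I -> S -> S) (h : I -> T -> T) (z : T -> T).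
Hypotheses (g_centroid : forall i, in_centroid mulA (g i))
  (d_der : forall i, is_derivation (@GRing.mul S) (d i)) (d_summable : summable d)
  (h_op : forall i, is_tensor_op tens (g i) (d i) (h i)) (z_sum : fam_sum h z).

Let zE a x R : uniq R -> supported (d^~ x) R ->
  z (tens a x) = \sum_(i <- R) tens (g i a) (d i x).
Proof. by move=> uR sR; apply: (fam_sum_tens h_op z_sum uR) => i /sR ->; rewrite tens0r. Qed.

Lemma right_family_tens1 a : z (tens a 1) = 0.
Proof.
have [R [uR sR]] := summable_supp 1 d_summable.
by rewrite (zE _ uR sR) big1 // => i _; rewrite derivation1 // tens0r.
Qed.

Lemma right_family_derivation : is_derivation mulT z.
Proof.
have z_lin : lin z by apply: fam_sum_lin z_sum => i; case: (h_op i).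
apply: derivation_tens z_lin _ => a u b t.
have [R1 s1] := d_summable (u * t); have [R2 s2] := d_summable u.
have [R3 s3] := d_summable t; have [uR sub1 sub2 sub3] := undup_cat3P R1 R2 R3.
rewrite mulT_tens (zE _ uR (supported_sub sub1 s1)) (zE _ uR (supported_sub sub2 s2)).
rewrite (zE _ uR (supported_sub sub3 s3)).
rewrite (lin_sum (mulT_bilin.1 _)) (lin_sum (mulT_bilin.2 _)) -big_split /=.
apply: eq_bigr => i _; rewrite !mulT_tens; case: (d_der i) => _ ->.
rewrite (linD (tens_linr tensP _)); have [_ /(_ a b) [-> ->]] := g_centroid i.
by [].
Qed.

End RightFamily.

Lemma S_linear_eq0 z : lin z -> S_linear z -> (forall a, z (tens a 1) = 0) ->
  forall t, z t = 0.
Proof.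
move=> zl zS z1; apply: (tens_lin_ext tensP zl (@lin_zero _ _ _)) => a x.
by rewrite -[x]mulr1 -sact_tens zS z1 (lin0 (sact_lin x)).
Qed.

Lemma dsum_decomp_of (X Y : (T -> T) -> Prop) :
  (forall x, X x -> is_derivation mulT x /\ S_linear x) ->
  (forall y, Y y -> is_derivation mulT y /\ forall a, y (tens a 1) = 0) ->
  (forall D, is_derivation mulT D ->
     exists x y, [/\ X x, Y y & forall t, D t = x t + y t]) ->
  dsum_decomp (is_derivation mulT) X Y.
Proof.
move=> Xder Yder split_der; split=> [z|z /Xder [[zl _] zS] /Yder [_ z1]]; last first.
  exact: S_linear_eq0.
split=> [/split_der //|[x [y [/Xder [xD _] /Yder [yD _] zE]]]].
have -> : z = fun t => x t + y t by apply: funext.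
exact: derivation_add.
Qed.

Definition centroid_tens_spanned := forall G, in_centroid mulT G ->
  exists l : seq ((A -> A) * S), (forall p, p \in l -> in_centroid mulA p.1) /\
    forall t, G t = \sum_(p <- l) tensor_map tens p.1 (mulL p.2) t.

Lemma tensor_map_scale (f : A -> A) (s : S) c t : lin f ->
  tensor_map tens f (mulL (c *: s)) t = c *: tensor_map tens f (mulL s) t.
Proof.
move=> fl; move: t; apply: (tens_lin_ext tensP (tensor_mapL_lin _ fl)).
  exact: lin_scale (tensor_mapL_lin _ fl).
move=> u v; rewrite !tensor_mapLE // -scalerAl.
exact: (linZ (tens_linr tensP _)).
Qed.

Lemma psi_iso_spanned : psi_iso mulA tens mulT -> centroid_tens_spanned.
Proof.
move=> [CA [iota [U [tensU [psi [[_ [_ [iC _]]] [tensUP [psiL [psiT [_ [_ psiS]]]]]]]]]]].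
move=> G /psiS [u uG].
suff [l [lc le]] : exists l : seq ((A -> A) * S), (forall p, p \in l -> in_centroid mulA p.1) /\
    forall t, psi u t = \sum_(p <- l) tensor_map tens p.1 (mulL p.2) t.
  by exists l; split=> // t; rewrite -uG le.
move: u {uG}; apply: (tens_ind tensUP) => [|c x y [l1 [c1 e1]] [l2 [c2 e2]]|a s].
- exists [::]; split=> // t; rewrite big_nil.
  exact: lin0 (fun a u u' => psiL a u u' t).
- exists (map (fun p => (p.1, c *: p.2)) l1 ++ l2); split.
    by move=> p; rewrite mem_cat => /orP[/mapP[q /c1 ? ->]|/c2].
  move=> t; rewrite psiL big_cat big_map e1 e2 scaler_sumr; congr (_ + _).
  by apply: eq_big_seq => p /c1 [pl _]; rewrite tensor_map_scale.
- exists [:: (iota a, s)]; split=> [p|t]; first by rewrite inE => /eqP ->; apply: iC.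
  rewrite big_seq1; apply: (tensor_map_unique tensP); first by case: (iC a).
    exact: mulL_lin.
  exact: psiT.
Qed.

Section SBasis.
Variables (JS : eqType) (e : JS -> S).
Hypotheses (e_free : free_family e)
  (e_span : forall x, exists (r : seq JS) (c : JS -> k), uniq r /\ x = \sum_(j <- r) c j *: e j).

Definition sproj (j : JS) : T -> A :=
  epsilon (inhabits (fun _ => 0))
    (fun h => lin h /\ forall a x, h (tens a x) = coef e x j *: a).

Lemma sprojP j : lin (sproj j) /\ forall a x, sproj j (tens a x) = coef e x j *: a.
Proof.
have bil : bilin (fun (a : A) (x : S) => coef e x j *: a).
  split=> [x|a] c u v /=; first by rewrite scalerDr !scalerA mulrC.
  by rewrite (coef_lin e_free e_span) scalerDl scalerA.
have [h hP] := tens_lift tensP bil.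
exact: (@epsilon_spec _ _ (fun h => lin h /\ forall a x, h (tens a x) = coef e x j *: a)
  (ex_intro _ h hP)).
Qed.

Lemma sproj_lin j : lin (sproj j). Proof. by case: (sprojP j). Qed.
Lemma sproj_tens j a x : sproj j (tens a x) = coef e x j *: a.
Proof. by case: (sprojP j). Qed.

Lemma sproj_supp t : exists r, uniq r /\ supported (sproj^~ t) r.
Proof.
move: t; apply: (tens_ind tensP) => [|c x y [r1 [_ s1]] [r2 [_ s2]]|a x].
- by exists [::]; split=> // j _; rewrite (lin0 (sproj_lin j)).
- exists (undup (r1 ++ r2)); split; first exact: undup_uniq.
  move=> j jn; rewrite (sproj_lin j) s1 ?s2 ?scaler0 ?addr0 //; apply: contra jn.
    exact: subset_undup_catr.
  exact: subset_undup_catl.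
- have [r [ur sr _]] := coef_expand e_free e_span x.
  by exists r; split=> // j jr; rewrite sproj_tens sr ?scale0r.
Qed.

Lemma tens_expand t r : uniq r -> supported (sproj^~ t) r ->
  t = \sum_(j <- r) tens (sproj j t) (e j).
Proof.
pose F j t := tens (sproj j t) (e j).
have F_lin j : lin (F j) by apply: lin_comp (sproj_lin j) (tens_linl tensP _).
have F_supp t' r' : supported (sproj^~ t') r' -> supported (F^~ t') r'.
  by move=> sr j /sr; rewrite /F => ->; rewrite tens0l.
have fsumF t' : fsum (F^~ t') = t'.
  move: t'; apply: (tens_lin_ext tensP _ (fun a x y => erefl)) => [|a x].
    by apply: lin_fsum => // t'; have [r' [_ /F_supp sr]] := sproj_supp t'; exists r'.
  have [r' [ur sr ex]] := coef_expand e_free e_span x.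
  rewrite (fsumE ur); last by apply: F_supp => j /sr; rewrite sproj_tens => ->; rewrite scale0r.
  rewrite [in RHS]ex (lin_sum (tens_linr tensP a)); apply: eq_bigr => j _.
  by rewrite /F sproj_tens (linZ (tens_linr tensP a)) (linZ (tens_linl tensP _)).
by move=> ur sr; rewrite -{1}(fsumF t) (fsumE ur (F_supp _ _ sr)).
Qed.

Lemma sproj_mulr j t b : sproj j (mulT t (tens b 1)) = mulA (sproj j t) b.
Proof.
move: t; apply: (tens_lin_ext tensP).
- exact: lin_comp (mulT_bilin.1 _) (sproj_lin j).
- exact: lin_comp (sproj_lin j) (mulA_bilin.1 b).
by move=> a x; rewrite mulT_tens !sproj_tens mulr1 (linZ (mulA_bilin.1 b)).
Qed.

Lemma sproj_mull j a t : sproj j (mulT (tens a 1) t) = mulA a (sproj j t).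
Proof.
move: t; apply: (tens_lin_ext tensP).
- exact: lin_comp (mulT_bilin.2 _) (sproj_lin j).
- exact: lin_comp (sproj_lin j) (mulA_bilin.2 a).
by move=> b x; rewrite mulT_tens !sproj_tens mul1r (linZ (mulA_bilin.2 a)).
Qed.

Section SLinearMap.
Variable Phi : T -> T.
Hypothesis Phi_lin : lin Phi.

Definition scoef j (a : A) : A := sproj j (Phi (tens a 1)).

Definition scomp j : T -> T := tensor_map tens (scoef j) (mulL (e j)).

Lemma scoef_lin j : lin (scoef j).
Proof. exact: lin_comp (lin_comp (tens_linl tensP 1) Phi_lin) (sproj_lin j). Qed.

Lemma scomp_lin j : lin (scomp j). Proof. exact: tensor_mapL_lin (scoef_lin j). Qed.

Lemma scompE j a x : scomp j (tens a x) = tens (scoef j a) (e j * x).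
Proof. exact: tensor_mapLE (scoef_lin j). Qed.

Lemma scoef_supp a : exists r, uniq r /\ supported (scoef^~ a) r.
Proof. exact: sproj_supp. Qed.

Lemma scomp_supp t : exists r, uniq r /\ supported (scomp^~ t) r.
Proof.
move: t; apply: (tens_ind tensP) => [|c x y [r1 [_ s1]] [r2 [_ s2]]|a x].
- by exists [::]; split=> // j _; rewrite (lin0 (scomp_lin j)).
- exists (undup (r1 ++ r2)); split; first exact: undup_uniq.
  move=> j jn; rewrite (scomp_lin j) s1 ?s2 ?scaler0 ?addr0 //; apply: contra jn.
    exact: subset_undup_catr.
  exact: subset_undup_catl.
- have [r [ur sr]] := scoef_supp a.
  by exists r; split=> // j /sr; rewrite scompE => ->; rewrite tens0l.
Qed.

Hypothesis Phi_S : S_linear Phi.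

Lemma S_linear_expand t : Phi t = fsum (scomp^~ t).
Proof.
move: t; apply: (tens_lin_ext tensP Phi_lin).
  apply: lin_fsum; first exact: scomp_lin.
  by move=> t; have [r [_ sr]] := scomp_supp t; exists r.
move=> a x; have [r [ur sr]] := scoef_supp a.
rewrite (fsumE ur); last by move=> j /sr; rewrite scompE => ->; rewrite tens0l.
transitivity (Phi (sact x (tens a 1))); first by rewrite sact_tens mulr1.
rewrite Phi_S (tens_expand ur sr) (lin_sum (sact_lin x)); apply: eq_bigr => j _.
by rewrite sact_tens scompE mulrC.
Qed.

Lemma S_linear_expand_fin r : uniq r -> (forall j, j \notin r -> forall a, scoef j a = 0) ->
  forall t, Phi t = \sum_(j <- r) scomp j t.
Proof.
move=> ur sr t; rewrite S_linear_expand (fsumE ur) // => j jr.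
move: t; apply: (tens_lin_ext tensP (scomp_lin j) (@lin_zero _ _ _)) => a x.
by rewrite scompE sr // tens0l.
Qed.

End SLinearMap.

Lemma scoef_derivation Phi j : is_derivation mulT Phi -> is_derivation mulA (scoef Phi j).
Proof.
move=> [Phil Phim]; split=> [|x y]; first exact: scoef_lin.
rewrite /scoef; have -> : tens (mulA x y) 1 = mulT (tens x 1) (tens y 1).
  by rewrite mulT_tens mulr1.
by rewrite Phim (linD (sproj_lin j)) sproj_mulr sproj_mull.
Qed.

Lemma scoef_centroid G j : in_centroid mulT G -> in_centroid mulA (scoef G j).
Proof.
move=> [Gl Gm]; split=> [|x y]; first exact: scoef_lin.
rewrite /scoef; have -> : tens (mulA x y) 1 = mulT (tens x 1) (tens y 1).
  by rewrite mulT_tens mulr1.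
have [G1 G2] := Gm (tens x 1) (tens y 1).
by split; [rewrite G1 sproj_mulr|rewrite G2 sproj_mull].
Qed.

Lemma scoef_summable Phi : summable (scoef Phi).
Proof. by move=> a; have [r [_ sr]] := scoef_supp Phi a; exists r. Qed.

Lemma scoef_fin_supported Phi (P : (A -> A) -> Prop) : fin_test_set P \/ fin_dim S ->
  (forall j, P (scoef Phi j)) -> fin_supported (scoef Phi).
Proof.
case=> [test|finS] PS; first exact: summable_fin_supported test PS (scoef_summable Phi).
by apply: fin_supported_of_cover; apply: fin_dim_free_cover finS e_free.
Qed.

Lemma S_linear_derivation_left Phi : is_derivation mulT Phi -> S_linear Phi ->
  left_tens_set mulA tens Phi.
Proof.
move=> PhiD PhiS; have Phil := PhiD.1.
exists JS, (scoef Phi), e, (scomp Phi); split.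
- by move=> j; apply: scoef_derivation.
- exact: scoef_summable.
- by move=> j; split; [apply: scomp_lin|apply: scompE].
- move=> t; have [r [ur sr]] := scomp_supp Phil t; exists r; split=> //.
  by rewrite (S_linear_expand Phil PhiS) (fsumE ur).
Qed.

Lemma S_linear_derivation_fin_left Phi : is_derivation mulT Phi -> S_linear Phi ->
  fin_supported (scoef Phi) -> fin_left_tens_set mulA tens Phi.
Proof.
move=> PhiD PhiS [r sr]; have Phil := PhiD.1; set R := undup r; pose t := tnth (in_tuple R).
exists (size R), (fun i => scoef Phi (t i)), (fun i => e (t i)), (fun i => scomp Phi (t i)).
split=> [i|i|x]; first exact: scoef_derivation.
  by split; [apply: scomp_lin|apply: scompE].
rewrite (S_linear_expand_fin Phil PhiS (undup_uniq r)) => [|j]; first exact: big_tnth.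
by rewrite mem_undup; apply: sr.
Qed.

Lemma centroid_tens_spanned_of_fin : perfect mulA ->
  (forall G, in_centroid mulT G -> fin_supported (scoef G)) -> centroid_tens_spanned.
Proof.
move=> pA finG G GC; have [r sr] := finG G GC.
have Gl := GC.1; have GS := centroid_S_linear pA GC.
exists (map (fun j => (scoef G j, e j)) (undup r)); split.
  by move=> p /mapP[j _ ->]; apply: scoef_centroid.
move=> t; rewrite (S_linear_expand_fin Gl GS (undup_uniq r)) => [|j]; first by rewrite big_map.
by rewrite mem_undup; apply: sr.
Qed.

End SBasis.

Section CentroidBasis.
Variables (J : eqType) (b : J -> A -> A).
Hypothesis b_basis : centroid_basis mulA b.

Let b_lin j : lin (b j). Proof. by case: (b_basis.1 j). Qed.

Definition bmap j (s : S) : T -> T := tensor_map tens (b j) (mulL s).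

Lemma bmap_lin j s : lin (bmap j s). Proof. exact: tensor_mapL_lin. Qed.

Lemma bmapE j s a x : bmap j s (tens a x) = tens (b j a) (s * x).
Proof. exact: tensor_mapLE. Qed.

Lemma bmap_lc j c s s' t : bmap j (c *: s + s') t = c *: bmap j s t + bmap j s' t.
Proof.
move: t; apply: (tens_lin_ext tensP (bmap_lin j _)).
  exact: lin_scale_add (bmap_lin j _) (bmap_lin j _).
by move=> u v; rewrite !bmapE mulrDl -scalerAl (tens_linr tensP _).
Qed.

Lemma bmapD j s s' t : bmap j (s + s') t = bmap j s t + bmap j s' t.
Proof. by have := bmap_lc j 1 s s' t; rewrite !scale1r. Qed.

Lemma bmapB j s s' t : bmap j (s - s') t = bmap j s t - bmap j s' t.
Proof. by have := bmap_lc j (-1) s' s t; rewrite !scaleN1r addrC => ->; rewrite addrC. Qed.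

Lemma bmap0 j t : bmap j 0 t = 0.
Proof.
move: t; apply: (tens_lin_ext tensP (bmap_lin j _) (@lin_zero _ _ _)) => u v.
by rewrite bmapE mul0r tens0r.
Qed.

Lemma bmap_sact j s y t : bmap j s (sact y t) = bmap j (s * y) t.
Proof.
move: t; apply: (tens_lin_ext tensP (lin_comp (sact_lin y) (bmap_lin j s)) (bmap_lin j _)).
by move=> u v; rewrite sact_tens !bmapE mulrA.
Qed.

Lemma sact_bmap j s y t : sact y (bmap j s t) = bmap j (y * s) t.
Proof.
move: t; apply: (tens_lin_ext tensP (lin_comp (bmap_lin j s) (sact_lin y)) (bmap_lin j _)).
by move=> u v; rewrite !bmapE sact_tens mulrA.
Qed.

Lemma sum_bmap_widen r R (sig : J -> S) t : uniq r -> uniq R -> {subset r <= R} ->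
  \sum_(j <- r) bmap j (sig j) t = \sum_(j <- R) bmap j (restr sig r j) t.
Proof.
move=> ur uR sub; rewrite (eq_big_seq (fun j => bmap j (restr sig r j) t)); last first.
  by move=> j jr; rewrite /restr jr.
have z j : j \notin r -> bmap j (restr sig r j) t = 0.
  by move=> jn; rewrite restr_supported // bmap0.
by apply: big_supported_eq => // j jn; apply: z => //; apply: contra jn; apply: sub.
Qed.

(* Reading off the [e i]-coordinate of [a (x) 1] in an [S]-basis [e] reduces the
   claim to the independence of [b] in [C(A)]. *)
Lemma bmap_free r (sig : J -> S) : uniq r ->
  (forall t, \sum_(j <- r) bmap j (sig j) t = 0) -> forall j, j \in r -> sig j = 0.
Proof.
move=> ur sum0; have [JS [e [e_free e_span]]] := basis_exists S.
have coef0 i j : j \in r -> coef e (sig j) i = 0.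
  apply: (b_basis.2.1 _ (fun j => coef e (sig j) i) ur) => a.
  have := congr1 (sproj e i) (sum0 (tens a 1)).
  rewrite (lin_sum (sproj_lin e_free e_span i)) (lin0 (sproj_lin e_free e_span i)).
  by apply: etrans; apply: eq_bigr => j' _; rewrite bmapE mulr1 (sproj_tens e_free e_span).
move=> j jr; have [r' [_ _ ->]] := coef_expand e_free e_span (sig j).
by rewrite big1 // => i _; rewrite coef0 // scale0r.
Qed.

Definition bmap_rep (z : T -> T) (rs : seq J * (J -> S)) :=
  uniq rs.1 /\ forall t, z t = \sum_(j <- rs.1) bmap j (rs.2 j) t.

Definition bmap_expansion (z : T -> T) := exists r sig, bmap_rep z (r, sig).

Lemma bmap_expansion0 z : (forall t, z t = 0) -> bmap_expansion z.
Proof. by move=> z0; exists [::], (fun _ => 0); split=> // t; rewrite big_nil. Qed.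

Lemma bmap_expansionD z1 z2 z : bmap_expansion z1 -> bmap_expansion z2 ->
  (forall t, z t = z1 t + z2 t) -> bmap_expansion z.
Proof.
move=> [r1 [sig1 [u1 e1]]] [r2 [sig2 [u2 e2]]] zE; set R := undup (r1 ++ r2).
exists R, (fun j => restr sig1 r1 j + restr sig2 r2 j); split=> [|t]; first exact: undup_uniq.
rewrite zE e1 e2 (@sum_bmap_widen r1 R _ _ u1 (undup_uniq _) subset_undup_catl).
rewrite (@sum_bmap_widen r2 R _ _ u2 (undup_uniq _) subset_undup_catr) -big_split /=.
by apply: eq_bigr => j _; rewrite bmapD.
Qed.

Lemma bmap_expansion_pure g s : in_centroid mulA g ->
  bmap_expansion (tensor_map tens g (mulL s)).
Proof.
move=> gC; have [r [c [ur gE]]] := b_basis.2.2 g gC.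
exists r, (fun j => c j *: s); split=> // t; move: t.
apply: (tens_lin_ext tensP (tensor_mapL_lin _ gC.1)).
  by apply: lin_sum_fun => j; apply: bmap_lin.
move=> a x; rewrite tensor_mapLE; last exact: gC.1.
rewrite gE (lin_sum (tens_linl tensP _)).
apply: eq_bigr => j _; rewrite bmapE -scalerAl (linZ (tens_linl tensP _)).
by rewrite (linZ (tens_linr tensP _)).
Qed.

Lemma fin_right_of_right z :
  (forall g : J -> S -> S, (forall j, is_derivation (@GRing.mul S) (g j)) -> summable g ->
     fin_supported g) ->
  right_tens_set tens b z -> fin_right_tens_set mulA tens z.
Proof.
move=> finJ [g [h [gD gs hop hz]]]; have [r rg] := finJ g gD gs.
set R := undup r; pose t := tnth (in_tuple R).
have hr j : j \notin R -> forall u, h j u = 0.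
  rewrite mem_undup => jr; case: (hop j) => hl hE.
  apply: (tens_lin_ext tensP hl (@lin_zero _ _ _)) => a x.
  by rewrite hE rg // tens0r.
exists (size R), (fun i => b (t i)), (fun i => g (t i)), (fun i => h (t i)).
split=> [i|i|i|u]; [exact: b_basis.1|exact: gD|exact: hop|].
by rewrite (fam_sum_fin hz (undup_uniq r) hr) big_tnth.
Qed.

Hypothesis spanned : centroid_tens_spanned.

Lemma centroid_bmap_expansion G : in_centroid mulT G -> bmap_expansion G.
Proof.
move=> /spanned [l [lC GE]]; elim: l lC G GE => [|p l IH] lC G GE.
  by apply: bmap_expansion0 => t; rewrite GE big_nil.
have lC' q : q \in l -> in_centroid mulA q.1 by move=> ql; apply: lC; rewrite inE ql orbT.
apply: (bmap_expansionD (bmap_expansion_pure p.2 (lC p (mem_head p l)))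
  (IH lC' _ (fun t => erefl))).
by move=> t; rewrite GE big_cons.
Qed.

Section Derivation.
Variable D : T -> T.
Hypothesis D_der : is_derivation mulT D.

Let D_lin : lin D. Proof. by case: D_der. Qed.

Definition dcomm s t := D (sact s t) - sact s (D t).

Lemma dcomm_centroid s : in_centroid mulT (dcomm s).
Proof. exact (centroid_commutator mulT_bilin D_der (sact_centroid s)). Qed.

Lemma dcomm_lc c s s' t : dcomm (c *: s + s') t = c *: dcomm s t + dcomm s' t.
Proof. by rewrite /dcomm !sact_lc (linD D_lin) (linZ D_lin) scalerBr opprD addrACA. Qed.

Lemma dcomm_mul s1 s2 t : dcomm (s1 * s2) t = dcomm s1 (sact s2 t) + sact s1 (dcomm s2 t).
Proof. by rewrite /dcomm !sact_mul (linB (sact_lin s1)) addrA subrK. Qed.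

Definition dcomm_rep s := epsilon (inhabits ([::], fun _ => 0)) (bmap_rep (dcomm s)).

Lemma dcomm_repP s : bmap_rep (dcomm s) (dcomm_rep s).
Proof.
apply: epsilon_spec; have [r [sig rep]] := centroid_bmap_expansion (dcomm_centroid s).
by exists (r, sig).
Qed.

(* [dcomm s = \sum_j b j (x) L_(gder j s)]; uniqueness of this expansion makes
   each [gder j] a derivation of [S]. *)
Definition gder j s := restr (dcomm_rep s).2 (dcomm_rep s).1 j.

Lemma gder_out j s : j \notin (dcomm_rep s).1 -> gder j s = 0.
Proof. exact: restr_supported. Qed.

Lemma dcomm_gder s R t : uniq R -> {subset (dcomm_rep s).1 <= R} ->
  dcomm s t = \sum_(j <- R) bmap j (gder j s) t.
Proof. by move=> uR sub; case: (dcomm_repP s) => ur ->; apply: sum_bmap_widen. Qed.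

Lemma gder_unique s R (tau : J -> S) : uniq R -> supported tau R ->
  (forall t, dcomm s t = \sum_(j <- R) bmap j (tau j) t) -> forall j, gder j s = tau j.
Proof.
move=> uR stau tauE; set R' := undup (R ++ (dcomm_rep s).1); have uR' : uniq R' := undup_uniq _.
have diff0 t : \sum_(j <- R') bmap j (tau j - gder j s) t = 0.
  under eq_bigr do rewrite bmapB.
  rewrite sumrB -(dcomm_gder t uR' subset_undup_catr) tauE.
  rewrite (@sum_bmap_widen R R' _ _ uR uR' subset_undup_catl); apply/eqP; rewrite subr_eq0.
  by apply/eqP/eq_bigr => j _; rewrite /restr; case: ifP => // /negbT /stau ->.
move=> j; case: (boolP (j \in R')) => jR.
  by apply/eqP; rewrite eq_sym -subr_eq0; apply/eqP; apply: (bmap_free uR' diff0).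
have jR1 : j \notin R by apply: contra jR; apply: subset_undup_catl.
have jR2 : j \notin (dcomm_rep s).1 by apply: contra jR; apply: subset_undup_catr.
by rewrite stau // gder_out.
Qed.

Lemma gder_lin j : lin (gder j).
Proof.
move=> c s s'; set R := undup ((dcomm_rep s).1 ++ (dcomm_rep s').1).
have uR : uniq R := undup_uniq _.
apply: (@gder_unique _ R (fun i => c *: gder i s + gder i s')) => // [i iR|t].
  have iR1 : i \notin (dcomm_rep s).1 by apply: contra iR; apply: subset_undup_catl.
  have iR2 : i \notin (dcomm_rep s').1 by apply: contra iR; apply: subset_undup_catr.
  by rewrite !gder_out // scaler0 addr0.
rewrite dcomm_lc (dcomm_gder t uR subset_undup_catl) (dcomm_gder t uR subset_undup_catr).
by rewrite scaler_sumr -big_split; apply: eq_bigr => i _; rewrite bmap_lc.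
Qed.

Lemma gder_mul j s1 s2 : gder j (s1 * s2) = gder j s1 * s2 + s1 * gder j s2.
Proof.
set R := undup ((dcomm_rep s1).1 ++ (dcomm_rep s2).1); have uR : uniq R := undup_uniq _.
apply: (@gder_unique _ R (fun i => gder i s1 * s2 + s1 * gder i s2)) => // [i iR|t].
  have iR1 : i \notin (dcomm_rep s1).1 by apply: contra iR; apply: subset_undup_catl.
  have iR2 : i \notin (dcomm_rep s2).1 by apply: contra iR; apply: subset_undup_catr.
  by rewrite !gder_out // mul0r mulr0 addr0.
rewrite dcomm_mul (dcomm_gder _ uR subset_undup_catl) (dcomm_gder _ uR subset_undup_catr).
rewrite (lin_sum (sact_lin s1)) -big_split; apply: eq_bigr => i _.
by rewrite bmapD bmap_sact sact_bmap.
Qed.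

Lemma gder_derivation j : is_derivation (@GRing.mul S) (gder j).
Proof. by split=> [|x y]; [apply: gder_lin|apply: gder_mul]. Qed.

Lemma gder_summable : summable gder.
Proof. by move=> s; exists (dcomm_rep s).1 => j; apply: gder_out. Qed.

Definition emap j : T -> T := tensor_map tens (b j) (gder j).

Lemma emap_lin j : lin (emap j).
Proof. exact (tensor_map_lin tensP (b_lin j) (gder_lin j)). Qed.

Lemma emapE j a x : emap j (tens a x) = tens (b j a) (gder j x).
Proof. exact (tensor_mapE tensP (b_lin j) (gder_lin j) a x). Qed.

Lemma emap_supp t : exists r, uniq r /\ supported (emap^~ t) r.
Proof.
move: t; apply: (tens_ind tensP) => [|c x y [r1 [_ s1]] [r2 [_ s2]]|a x].
- by exists [::]; split=> // j _; rewrite (lin0 (emap_lin j)).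
- exists (undup (r1 ++ r2)); split; first exact: undup_uniq.
  move=> j jn; rewrite (emap_lin j) s1 ?s2 ?scaler0 ?addr0 //; apply: contra jn.
    exact: subset_undup_catr.
  exact: subset_undup_catl.
- exists (dcomm_rep x).1; split; first by case: (dcomm_repP x).
  by move=> j jn; rewrite emapE gder_out // tens0r.
Qed.

Definition Eder t := fsum (emap^~ t).

Lemma Eder_lin : lin Eder.
Proof.
apply: lin_fsum; first exact: emap_lin.
by move=> t; have [r [_ sr]] := emap_supp t; exists r.
Qed.

Lemma EderE a x R : uniq R -> {subset (dcomm_rep x).1 <= R} ->
  Eder (tens a x) = \sum_(j <- R) tens (b j a) (gder j x).
Proof.
move=> uR sub; rewrite /Eder (fsumE uR).
  by apply: eq_bigr => j _; rewrite emapE.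
move=> j jR; rewrite emapE gder_out ?tens0r //.
by apply: contra jR; apply: sub.
Qed.

Lemma Eder_derivation : is_derivation mulT Eder.
Proof.
apply: derivation_tens Eder_lin _ => a s c t.
have [uR sub1 sub2 sub3] := undup_cat3P (dcomm_rep (s * t)).1 (dcomm_rep s).1 (dcomm_rep t).1.
rewrite mulT_tens (EderE _ uR sub1) (EderE _ uR sub2) (EderE _ uR sub3).
rewrite (lin_sum (mulT_bilin.1 _)) (lin_sum (mulT_bilin.2 _)) -big_split /=.
apply: eq_bigr => j _; rewrite !mulT_tens gder_mul (linD (tens_linr tensP _)).
by have [_ /(_ a c) [<- <-]] := b_basis.1 j.
Qed.

Lemma Eder_dcomm s t : Eder (sact s t) - sact s (Eder t) = dcomm s t.
Proof.
move: t; apply: (tens_lin_ext tensP).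
- exact: lin_sub (lin_comp (sact_lin s) Eder_lin) (lin_comp Eder_lin (sact_lin s)).
- by case: (dcomm_centroid s).
move=> a x; have [uR sub1 sub2 sub3] :=
  undup_cat3P (dcomm_rep (s * x)).1 (dcomm_rep x).1 (dcomm_rep s).1.
rewrite sact_tens (EderE _ uR sub1) (EderE _ uR sub2) (dcomm_gder _ uR sub3).
rewrite (lin_sum (sact_lin s)) -sumrB; apply: eq_bigr => j _.
by rewrite sact_tens bmapE gder_mul (linD (tens_linr tensP _)) addrK.
Qed.

Lemma Eder_right : right_tens_set tens b Eder.
Proof.
exists gder, emap; split=> [j||j|t]; [exact: gder_derivation|exact: gder_summable| |].
  by split=> [|u v]; [apply: emap_lin|apply: emapE].
by have [r [ur sr]] := emap_supp t; exists r; split=> //; apply: fsumE.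
Qed.

(* [D - Eder] commutes with the [S]-action because [Eder] has the same
   commutators [dcomm s] with it as [D]. *)
Lemma derivation_split : exists E, [/\ right_tens_set tens b E,
  is_derivation mulT (fun t => D t - E t) & S_linear (fun t => D t - E t)].
Proof.
exists Eder; split; first exact: Eder_right.
  exact (derivation_sub mulT_bilin D_der Eder_derivation).
move=> s t; have := Eder_dcomm s t; rewrite /dcomm => /eqP.
rewrite subr_eq => /eqP ->; rewrite (linB (sact_lin s)).
by rewrite opprD addrA subKr.
Qed.

End Derivation.





Lemma dsum_decomp_basis :
  dsum_decomp (is_derivation mulT) (left_tens_set mulA tens) (right_tens_set tens b).
Proof.
have [JS [e [e_free e_span]]] := basis_exists S.
apply: dsum_decomp_of => [x [I [f [s [h [fD fs hop hx]]]]]|y [g [h [gD gs hop hy]]]|D DD].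
- split; first exact: left_family_derivation fD fs hop hx.
  exact: left_family_S_linear fs hop hx.
- split; first exact: right_family_derivation b_basis.1 gD gs hop hy.
  exact: right_family_tens1 gD gs hop hy.
- have [E [ER DED DES]] := derivation_split DD.
  exists (fun t => D t - E t), E; split=> //; last by move=> t; rewrite subrK.
  exact (S_linear_derivation_left e_free e_span DED DES).
Qed.

Lemma fin_dsum_decomp_basis :
  fin_test_set (is_derivation mulA) \/ fin_dim S ->
  fin_test_set (is_derivation (@GRing.mul S)) \/ (exists r : seq J, forall j, j \in r) ->
  dsum_decomp (is_derivation mulT) (fin_left_tens_set mulA tens) (fin_right_tens_set mulA tens).
Proof.
move=> finL finR; have [JS [e [e_free e_span]]] := basis_exists S.
apply: dsum_decomp_of => [x [n [f [s [h [fD hop xE]]]]]|y [n [g [d [h [gC dD hop yE]]]]]|D DD].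
- have xs := fam_sum_ord xE.
  split; first exact: left_family_derivation fD (summable_ord f) hop xs.
  exact: left_family_S_linear (summable_ord f) hop xs.
- have ys := fam_sum_ord yE.
  split; first exact: right_family_derivation gC dD (summable_ord d) hop ys.
  exact: right_family_tens1 dD (summable_ord d) hop ys.
- have [E [ER DED DES]] := derivation_split DD.
  exists (fun t => D t - E t), E; split; last by move=> t; rewrite subrK.
  + apply: (S_linear_derivation_fin_left e_free e_span DED DES).
    by apply: (scoef_fin_supported e_free e_span finL) => j; apply: scoef_derivation.
  + apply: fin_right_of_right ER => g gD gs; case: finR => [test|finJ].
      exact: summable_fin_supported test gD gs.
    exact: fin_supported_of_cover finJ.
Qed.

End CentroidBasis.

Lemma star_decomp_of_spanned : centroid_tens_spanned -> star_decomp mulA tens mulT.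
Proof. by move=> spanned J b b_basis; apply: dsum_decomp_basis. Qed.

Lemma spanned_of_fin : perfect mulA -> fin_test_set (in_centroid mulA) \/ fin_dim S ->
  centroid_tens_spanned.
Proof.
move=> pA finC; have [JS [e [e_free e_span]]] := basis_exists S.
apply: (centroid_tens_spanned_of_fin e_free e_span pA) => G GC.
by apply: (scoef_fin_supported e_free e_span finC) => j; apply: scoef_centroid.
Qed.

Lemma centroid_basis_exists : exists (J : eqType) (b : J -> A -> A), centroid_basis mulA b.
Proof.
have [J [b [bC b_free b_span]]] := hamel (in_centroid mulA).
exists J, b; split=> //; split=> [r c ur b0|g /b_span [r [c [ur ->]]]].
  by apply: b_free ur _; apply: funext => x; rewrite fct_sumE; apply: b0.
by exists r, c; split=> // x; rewrite fct_sumE.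
Qed.

Lemma scale_fctE (U : Type) (V : lmodType k) c (f : U -> V) x : (c *: f) x = c *: f x.
Proof. by []. Qed.

Section FiniteCentroidBasis.
Variables (J : eqType) (b : J -> A -> A).
Hypothesis b_basis : centroid_basis mulA b.

Let b_free : free_family b.
Proof.
move=> r c ur b0; apply: b_basis.2.1 ur _ => x.
by move/(congr1 (fun f => f x)): b0; rewrite fct_sumE; apply.
Qed.

Lemma centroid_basis_fin_op_space : op_space_fin_dim (in_centroid mulA) ->
  exists r : seq J, forall j, j \in r.
Proof.
move=> [n [v [_ v_span]]]; apply: (free_fin_span_cover b_free) => j.
have [c cE] := v_span _ (b_basis.1 j); exists c.
by apply: funext => x; rewrite cE fct_sumE.
Qed.

(* Each [b j] is recorded by its values on a spanning family [v] of [A], which lie in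
   the span of the [n * n] maps [q |-> if q == q0 then v p else 0]. *)
Lemma centroid_basis_fin_dim : fin_dim A -> exists r : seq J, forall j, j \in r.
Proof.
move=> [n [v v_span]]; pose w j : 'I_n -> A := fun q => b j (v q).
pose delta (p : 'I_n * 'I_n) : 'I_n -> A := fun q => if q == p.2 then v p.1 else 0.
apply: (free_fin_span_cover (w := w) (v := delta)) => [r c ur w0|j].
  apply: b_basis.2.1 ur _ => x.
  have L : lin (fun x => \sum_(j <- r) c j *: b j x).
    by apply: lin_sum_fun => j; apply: lin_scale; case: (b_basis.1 j).
  have [c' ->] := v_span x; rewrite (lin_sum L) big1 // => q _.
  have := congr1 (fun f => f q) w0; rewrite fct_sumE /= => w0q.
  by rewrite (linZ L) w0q scaler0.
have [cq cqE] := @choice _ _ (fun q (c : 'I_n -> k) => b j (v q) = \sum_i c i *: v i)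
  (fun q => v_span (b j (v q))).
exists (fun p => cq p.2 p.1); apply: funext => q; rewrite /w cqE fct_sumE /=.
rewrite -(pair_bigA _ (fun i q' => (cq q' i *: delta (i, q')) q)); apply: eq_bigr => i _.
rewrite (bigD1 q) //= big1 => [|q' q'q]; first by rewrite scale_fctE /delta /= eqxx addr0.
by rewrite scale_fctE /delta /= eq_sym (negbTE q'q) scaler0.
Qed.

End FiniteCentroidBasis.

Lemma star_decomp_of_conditions : perfect mulA ->
  fin_dim S \/ alg_fg mulA \/ pfgc mulA \/ unital_alg mulA -> star_decomp mulA tens mulT.
Proof.
move=> pA cond; apply: star_decomp_of_spanned; apply: (spanned_of_fin pA).
case: cond => [finS|[fg|[[_ [_ mfg]]|un]]]; [by right|left..].
- exact: alg_fg_centroid_test mulA_bilin fg.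
- exact: module_fg_centroid_test pA mfg.
- exact: unital_centroid_test mulA_bilin un.
Qed.

Lemma fin_dsum_decomp : perfect mulA ->
  (fin_dim A \/ fin_dim S) \/
  ((op_space_fin_dim (in_centroid mulA) \/ comalg_fg S) /\
   (alg_fg mulA \/ (module_fg_over (in_centroid mulA) /\ DC_commute mulA) \/
    module_fg_over (in_dcentroid mulA))) ->
  dsum_decomp (is_derivation mulT) (fin_left_tens_set mulA tens) (fin_right_tens_set mulA tens).
Proof.
move=> pA cond; have [J [b b_basis]] := centroid_basis_exists.
have lin_test (P : (A -> A) -> Prop) : fin_dim A -> (forall f, P f -> lin f) -> fin_test_set P.
  by move=> finA Plin; apply: (fin_test_set_sub (fin_dim_lin_test A finA) Plin).
apply: (fin_dsum_decomp_basis b_basis).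
- apply: (spanned_of_fin pA).
  case: cond => [[finA|finS]|[_ [fg|[[mfg _]|dmfg]]]]; [left|by right|left..].
  + by apply: lin_test finA _ => f [].
  + exact: alg_fg_centroid_test mulA_bilin fg.
  + exact: module_fg_centroid_test pA mfg.
  + exact: module_fg_centroid_test pA (module_fg_dcentroid dmfg).
- case: cond => [[finA|finS]|[_ [fg|[[mfg DC]|dmfg]]]]; [left|by right|left..].
  + by apply: lin_test finA _ => f [].
  + exact: alg_fg_derivation_test mulA_bilin fg.
  + exact: module_fg_derivation_test mfg DC.
  + exact: dmodule_fg_derivation_test dmfg.
- case: cond => [[finA|finS]|[[opC|fgS] _]]; [right|left|right|left].
  + exact: centroid_basis_fin_dim b_basis finA.
  + by apply: fin_test_set_sub (fin_dim_lin_test S finS) _ => d [].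
  + exact: centroid_basis_fin_op_space b_basis opC.
  + exact: comalg_fg_derivation_test fgS.
Qed.

End Setting.

Theorem theorem2p5 (k : fieldType) (A : lmodType k) (mulA : A -> A -> A)
  (S : comAlgType k) (T : lmodType k) (tens : A -> S -> T) (mulT : T -> T -> T) :
  bilin mulA -> perfect mulA ->
  is_tensor_product tens -> bilin mulT ->
  (forall (a b : A) (s t : S), mulT (tens a s) (tens b t) = tens (mulA a b) (s * t)) ->
  [/\ psi_iso mulA tens mulT -> star_decomp mulA tens mulT,
      fin_dim S \/ alg_fg mulA \/ pfgc mulA \/ unital_alg mulA ->
        star_decomp mulA tens mulT &
      (fin_dim A \/ fin_dim S) \/
      ((op_space_fin_dim (in_centroid mulA) \/ comalg_fg S) /\
       (alg_fg mulA \/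
        (module_fg_over (in_centroid mulA) /\ DC_commute mulA) \/
        module_fg_over (in_dcentroid mulA))) ->
        dsum_decomp (is_derivation mulT) (fin_left_tens_set mulA tens)
                    (fin_right_tens_set mulA tens)].
Proof.
move=> mulA_bilin pA tensP mulT_bilin mulT_tens; split.
- move/(psi_iso_spanned tensP).
  exact: star_decomp_of_spanned mulA_bilin tensP mulT_bilin mulT_tens.
- exact: star_decomp_of_conditions mulA_bilin tensP mulT_bilin mulT_tens pA.
- exact: fin_dsum_decomp mulA_bilin tensP mulT_bilin mulT_tens pA.
Qed.
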